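(* Let $z\in(0,1)\setminus\mathbb{Q}$ and suppose $z\in[r_1,r_2]$ for rationals $r_1,r_2\in(0,1)$ whose continued fraction expansions have one of the two forms $$\text{(i)}\quad r_1=[(2)^{2k-1},(2,1)^\ell,s,a_1,\dots,a_{n_1},\infty],\qquad r_2=[(2)^{2k-1},b_1,\dots,b_{n_2},\infty],$$ $$\text{(ii)}\quad r_1=[(2)^{2k},a_1,\dots,a_{n_1},\infty],\qquad r_2=[(2)^{2k},(2,1)^\ell,s,b_1,\dots,b_{n_2},\infty],$$ where $k\ge1$, $\ell\ge0$, $s\ge3$ are integers and $a_i,b_i$ are positive integers ($n_1,n_2\ge 0$). Then $z\notin\mathcal{B}_2$.
   Context: For irrational $x\in(0,1)$, $x=[a_1(x),a_2(x),\dots]$ denotes its simple continued fraction expansion. For positive integers $c_1,\dots,c_n$, $[c_1,\dots,c_n,\infty]$ denotes the rational number $\cfrac{1}{c_1+\cfrac{1}{\ddots+\cfrac{1}{c_n}}}$. The notation $(c_1,\dots,c_m)^\ell$ denotes the block $c_1,\dots,c_m$ repeated $\ell$ times (empty if $\ell=0$), and $(c)^\ell$ denotes $c$ repeated $\ell$ times. $\mathcal{B}_2$ is the set of irrational $x\in(0,1)$ with $a_k(x)\le2$ for all $k\ge1$. *)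

From Stdlib Require Import Reals ZArith List.
Open Scope R_scope.

Definition irrational (x : R) : Prop :=
  forall p q : Z, q <> 0%Z -> x <> IZR p / IZR q.

Definition gauss (x : R) : R := / x - IZR (Int_part (/ x)).

(* k-th partial quotient a_k(x) (k >= 1) of x in (0,1): floor(1 / T^(k-1) x) *)
Definition cf_digit (k : nat) (x : R) : Z :=
  Int_part (/ (Nat.iter (k - 1) gauss x)).

Definition B2 (x : R) : Prop :=
  0 < x < 1 /\ irrational x /\ forall k : nat, (1 <= k)%nat -> (cf_digit k x <= 2)%Z.

(* [c_1, ..., c_n, oo] = 1/(c_1 + 1/(... + 1/c_n)) *)
Definition cf_val (cs : list nat) : R :=
  fold_right (fun c acc => / (INR c + acc)) 0 cs.

Definition rep (c : nat) (l : nat) : list nat := repeat c l.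
Definition rep21 (l : nat) : list nat := concat (repeat (2 :: 1 :: nil)%nat l).

(* Every x in B_2 is x = 1/(d + T x) with d in {1,2} and T x again in B_2 (T the Gauss
   map), so B_2 lies in (1/3, 1).  Hence if x in B_2 lies between [2, u] and [2, v], then
   d = 2 and T x lies between v and u.  Stripping the common prefix (2)^n from r_1 and r_2
   in this way sends z to a point y of B_2 with y <= [(2,1)^l, s, ...]: in both cases the
   parity of n puts that rational on the upper side.  This is impossible, as B_2 lies
   strictly above [s, ...] <= 1/3, and y <= [2, 1, t] in B_2 forces the digits 2, 1 and
   T^2 y <= t. *)
From Stdlib Require Import Reals ZArith List Lia Lra.
Open Scope R_scope.

Lemma Rinv_le_rev a b : 0 < a -> / a <= / b -> b <= a.
Proof.
  intros Ha H.
  apply Rinv_le_contravar in H; [|now apply Rinv_0_lt_compat].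
  now rewrite !Rinv_inv in H.
Qed.

Lemma irrational_neq_IZR x d : irrational x -> x <> IZR d.
Proof.
  intros irr E. apply (irr d 1%Z); [lia|]. rewrite E. field.
Qed.

Lemma irrational_inv x : irrational x -> irrational (/ x).
Proof.
  intros irr p q hq E.
  assert (Hq : IZR q <> 0) by now apply not_0_IZR.
  assert (Hp : IZR p <> 0).
  { intro P0. apply (irrational_neq_IZR x 0 irr).
    rewrite <- (Rinv_inv x), E, P0. unfold Rdiv. now rewrite Rmult_0_l, Rinv_0. }
  apply (irr q p); [intro P0; apply Hp; now rewrite P0|].
  rewrite <- (Rinv_inv x), E. field. now split.
Qed.

Lemma irrational_sub_IZR x d : irrational x -> irrational (x - IZR d).
Proof.
  intros irr p q hq E.
  assert (Hq : IZR q <> 0) by now apply not_0_IZR.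
  apply (irr (d * q + p)%Z q hq).
  rewrite plus_IZR, mult_IZR. replace x with (x - IZR d + IZR d) by ring.
  rewrite E. field. exact Hq.
Qed.

Lemma cf_digit_gauss k x : (1 <= k)%nat -> cf_digit k (gauss x) = cf_digit (S k) x.
Proof.
  intros hk. unfold cf_digit.
  replace (S k - 1)%nat with (S (k - 1)) by lia.
  now rewrite Nat.iter_succ_r.
Qed.

Lemma B2_bounds x : B2 x -> 0 < x < 1.
Proof. now intros [H _]. Qed.

Lemma B2_gauss x : B2 x -> B2 (gauss x).
Proof.
  intros [[x0 x1] [irr dig]].
  destruct (base_Int_part (/ x)) as [b1 b2].
  unfold B2, gauss. split; [split|split].
  - destruct (Req_dec (/ x) (IZR (Int_part (/ x)))) as [E|E]; [|lra].
    exfalso. exact (irrational_neq_IZR _ _ (irrational_inv x irr) E).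
  - lra.
  - now apply irrational_sub_IZR, irrational_inv.
  - intros k hk. fold (gauss x). rewrite cf_digit_gauss by exact hk. apply dig. lia.
Qed.

Lemma B2_first_digit x : B2 x ->
  exists d : Z, (d = 1 \/ d = 2)%Z /\ x = / (IZR d + gauss x).
Proof.
  intros hx. destruct (B2_bounds x hx) as [x0 x1].
  destruct (base_Int_part (/ x)) as [_ b2].
  assert (hinv : 1 < / x).
  { apply (Rmult_lt_reg_l x); [exact x0|]. rewrite Rinv_r by lra. lra. }
  assert (dpos : (0 < Int_part (/ x))%Z) by (apply lt_IZR; lra).
  assert (dle : (Int_part (/ x) <= 2)%Z) by (apply (proj2 (proj2 hx) 1%nat); lia).
  exists (Int_part (/ x)). split; [lia|].
  unfold gauss. replace (IZR (Int_part (/ x)) + (/ x - IZR (Int_part (/ x)))) with (/ x)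
    by ring.
  now rewrite Rinv_inv.
Qed.

(* Also for lists with zero digits, since [/ 0 = 0]. *)
Lemma cf_val_nonneg cs : 0 <= cf_val cs.
Proof.
  induction cs as [|c cs IH]; simpl; [lra|].
  destruct (Rle_lt_or_eq_dec 0 (INR c + cf_val cs)) as [Hlt|Heq].
  - pose proof (pos_INR c). lra.
  - left. now apply Rinv_0_lt_compat.
  - rewrite <- Heq, Rinv_0. lra.
Qed.

Lemma cf_val_cons c cs : cf_val (c :: cs) = / (INR c + cf_val cs).
Proof. reflexivity. Qed.

Lemma cf_val_cons_le_1 c cs : (1 <= c)%nat -> cf_val (c :: cs) <= 1.
Proof.
  intros hc. rewrite cf_val_cons, <- Rinv_1.
  pose proof (cf_val_nonneg cs). apply le_INR in hc.
  apply Rinv_le_contravar; simpl in hc; lra.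
Qed.

Lemma B2_between_cons2 x u v : B2 x ->
  cf_val (2%nat :: u) <= x <= cf_val (2%nat :: v) ->
  B2 (gauss x) /\ cf_val v <= gauss x <= cf_val u.
Proof.
  intros hx [h1 h2]. rewrite cf_val_cons in h1, h2. change (INR 2) with 2 in h1, h2.
  pose proof (cf_val_nonneg u). pose proof (cf_val_nonneg v).
  pose proof (B2_gauss x hx) as hg. destruct (B2_bounds _ hg).
  split; [exact hg|].
  destruct (B2_first_digit x hx) as [d [[-> | ->] E]]; rewrite E in h1, h2;
    apply Rinv_le_rev in h2; try lra.
  apply Rinv_le_rev in h1; lra.
Qed.

Lemma B2_between_rep2_even m : forall x u v, B2 x ->
  cf_val (rep 2 (2 * m) ++ u) <= x <= cf_val (rep 2 (2 * m) ++ v) ->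
  exists y, B2 y /\ cf_val u <= y <= cf_val v.
Proof.
  induction m as [|m IH]; intros x u v hx hxuv; [now exists x|].
  replace (2 * S m)%nat with (S (S (2 * m))) in hxuv by lia.
  destruct (B2_between_cons2 x _ _ hx hxuv) as [hg hguv].
  destruct (B2_between_cons2 _ _ _ hg hguv) as [hgg hgguv].
  exact (IH _ u v hgg hgguv).
Qed.

Lemma B2_between_rep2_odd k x u v : (1 <= k)%nat -> B2 x ->
  cf_val (rep 2 (2 * k - 1) ++ u) <= x <= cf_val (rep 2 (2 * k - 1) ++ v) ->
  exists y, B2 y /\ cf_val v <= y <= cf_val u.
Proof.
  intros hk hx hxuv.
  replace (2 * k - 1)%nat with (2 * (k - 1) + 1)%nat in hxuv by lia.
  unfold rep in hxuv. rewrite repeat_app, <- !app_assoc in hxuv.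
  destruct (B2_between_rep2_even _ x _ _ hx hxuv) as [y [hy hyuv]].
  exists (gauss y). now apply B2_between_cons2.
Qed.

Lemma B2_gt_cons_ge3 y s t : 3 <= s -> 0 <= t -> B2 y -> / (s + t) < y.
Proof.
  intros hs ht hy.
  destruct (Rle_lt_dec y (/ (s + t))) as [hle|]; [exfalso|assumption].
  pose proof (B2_bounds _ (B2_gauss y hy)).
  destruct (B2_first_digit y hy) as [d [[-> | ->] E]]; rewrite E in hle;
    apply Rinv_le_rev in hle; lra.
Qed.

Lemma B2_le_cons21 y t : 0 <= t <= 1 -> B2 y ->
  y <= / (2 + / (1 + t)) -> B2 (gauss (gauss y)) /\ gauss (gauss y) <= t.
Proof.
  intros ht hy hle.
  assert (0 < / (1 + t)) by (apply Rinv_0_lt_compat; lra).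
  pose proof (B2_gauss y hy) as hg. pose proof (B2_gauss _ hg) as hgg.
  destruct (B2_bounds _ hg), (B2_bounds _ hgg).
  split; [exact hgg|].
  destruct (B2_first_digit y hy) as [d [[-> | ->] E]]; rewrite E in hle;
    apply Rinv_le_rev in hle; try lra.
  assert (hg_ge : / (1 + t) <= gauss y) by lra.
  destruct (B2_first_digit _ hg) as [d' [[-> | ->] E']]; rewrite E' in hg_ge;
    apply Rinv_le_rev in hg_ge; lra.
Qed.

Lemma cf_val_rep21_lt_B2 l s a y : (3 <= s)%nat -> B2 y ->
  cf_val (rep21 l ++ s :: a) < y.
Proof.
  intros hs. revert y.
  induction l as [|l IH]; intros y hy.
  - apply B2_gt_cons_ge3; [|apply cf_val_nonneg|exact hy].
    apply le_INR in hs. simpl in hs. lra.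
  - set (t := cf_val (rep21 l ++ s :: a)).
    assert (ht : 0 <= t <= 1).
    { split; [apply cf_val_nonneg|]. unfold t.
      destruct l; apply cf_val_cons_le_1; lia. }
    change (cf_val (rep21 (S l) ++ s :: a)) with (/ (INR 2 + / (INR 1 + t))).
    change (INR 2) with 2. change (INR 1) with 1.
    destruct (Rle_lt_dec y (/ (2 + / (1 + t)))) as [hle|]; [exfalso|assumption].
    destruct (B2_le_cons21 y t ht hy hle) as [hgg hle'].
    specialize (IH _ hgg). fold t in IH. lra.
Qed.

Theorem mainTheorem5 (z r1 r2 : R) (k l s : nat) (a b : list nat) :
  (1 <= k)%nat -> (3 <= s)%nat ->
  Forall (fun c => (1 <= c)%nat) a -> Forall (fun c => (1 <= c)%nat) b ->
  0 < z < 1 -> irrational z ->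
  r1 <= z <= r2 ->
  ((r1 = cf_val (rep 2 (2 * k - 1) ++ rep21 l ++ s :: a) /\
    r2 = cf_val (rep 2 (2 * k - 1) ++ b)) \/
   (r1 = cf_val (rep 2 (2 * k) ++ a) /\
    r2 = cf_val (rep 2 (2 * k) ++ rep21 l ++ s :: b))) ->
  ~ B2 z.
Proof.
  intros hk hs _ _ _ _ hz cases hB.
  destruct cases as [[-> ->] | [-> ->]].
  - destruct (B2_between_rep2_odd k z _ _ hk hB hz) as [y [hy [_ hle]]].
    pose proof (cf_val_rep21_lt_B2 l s a y hs hy). lra.
  - destruct (B2_between_rep2_even k z _ _ hB hz) as [y [hy [_ hle]]].
    pose proof (cf_val_rep21_lt_B2 l s b y hs hy). lra.
Qed.
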